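(* Let $B$ be a minimum-weight basis of the weighted uncertainty matroid $\mathcal{M}=(E,\mathcal{I},A,w)$ and let $Q$ be a certificate that verifies $B$. Let $e\in B$ and $e'\notin B$ with $U_e=U_{e'}=w_e=w_{e'}$ be such that $e\in C_{e'}$, where $C_{e'}$ is the fundamental circuit of $e'$ with respect to $B$. Then $Q'=(Q\setminus\{e'\})\cup\{e\}$ is a certificate that verifies $B'=(B\setminus\{e\})\cup\{e'\}$.
   Context: A weighted uncertainty matroid $\mathcal{M}=(E,\mathcal{I},A,w)$ consists of a matroid $M=(E,\mathcal{I})$ on a finite set $E$, for each $e\in E$ a non-empty finite union $A_e$ of bounded real intervals (each open or closed), and a weight $w_e\in A_e$. Let $L_e=\inf A_e$, $U_e=\sup A_e$. A minimum-weight basis is a basis of $M$ minimizing the sum of weights. A weight assignment is $w^*:E\to\mathbb{R}$ with $w^*_e\in A_e$, consistent with $Q$ if $w^*_e=w_e$ for $e\in Q$. $Q$ verifies a basis $B$ (is a certificate for $B$) if for every weight assignment consistent with $Q$, $B$ is a minimum-weight basis with respect to it. For a basis $B$ and $f\notin B$, the fundamental circuit of $f$ is the unique circuit contained in $B\cup\{f\}$. *)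

From HB Require Import structures.
From mathcomp Require Import all_boot all_order all_algebra.
From mathcomp Require Import boolp reals.
From mathcomp Require classical_sets.
Set Implicit Arguments. Unset Strict Implicit. Unset Printing Implicit Defensive.
Import Order.TTheory GRing.Theory Num.Theory.
Local Open Scope ring_scope.

Record matroid (E : finType) := Matroid {
  indep : pred {set E};
  indep_set0 : indep (finset.set0 : {set E});
  indep_sub : forall I J : {set E}, J \subset I -> indep I -> indep J;
  indep_exchange : forall I J : {set E}, indep I -> indep J -> (#|I| < #|J|)%N ->
      exists2 x, x \in J :\: I & indep (x |: I)
}.

Definition is_basis (E : finType) (M : matroid E) (B : {set E}) : Prop :=
  indep M B /\ forall J : {set E}, B \proper J -> ~~ indep M J.

Definition is_circuit (E : finType) (M : matroid E) (C : {set E}) : Prop :=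
  ~~ indep M C /\ forall D : {set E}, D \proper C -> indep M D.

(* A bounded real interval (a, b, closed?): [a,b] if closed, (a,b) otherwise. *)
Definition interval_of (R : realType) := (R * R * bool)%type.

Definition in_interval (R : realType) (I : interval_of R) (x : R) : Prop :=
  let: (a, b, c) := I in if c then a <= x <= b else a < x < b.

Definition uarea (R : realType) := seq (interval_of R).

Definition in_uarea (R : realType) (A : uarea R) (x : R) : Prop :=
  exists2 I, I \in A & in_interval I x.

Definition Lbound (R : realType) (A : uarea R) : R := inf (fun x => in_uarea A x).
Definition Ubound (R : realType) (A : uarea R) : R := sup (fun x => in_uarea A x).

Record wumatroid (R : realType) (E : finType) := WUMatroid {
  wum_M : matroid E;
  wum_A : E -> uarea R;
  wum_w : E -> R;
  wum_wA : forall e, in_uarea (wum_A e) (wum_w e)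
}.

Definition weight (R : realType) (E : finType) (w : E -> R) (B : {set E}) : R :=
  \sum_(e in B) w e.

Definition is_min_basis (R : realType) (E : finType) (M : matroid E)
    (w : E -> R) (B : {set E}) : Prop :=
  is_basis M B /\ forall B', is_basis M B' -> weight w B <= weight w B'.

Definition weight_assignment (R : realType) (E : finType) (W : wumatroid R E)
    (ws : E -> R) : Prop := forall e, in_uarea (wum_A W e) (ws e).

Definition consistent (R : realType) (E : finType) (W : wumatroid R E)
    (Q : {set E}) (ws : E -> R) : Prop :=
  weight_assignment W ws /\ forall e, e \in Q -> ws e = wum_w W e.

Definition verifies (R : realType) (E : finType) (W : wumatroid R E)
    (Q B : {set E}) : Prop :=
  forall ws, consistent W Q ws -> is_min_basis (wum_M W) ws B.

Definition fundamental_circuit (E : finType) (M : matroid E) (B : {set E})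
    (f : E) (C : {set E}) : Prop :=
  is_circuit M C /\ C \subset f |: B.

From mathcomp Require Import all_boot all_order all_algebra.
From mathcomp Require Import boolp reals.
From mathcomp Require classical_sets.
From mathcomp Require Import zify lra.
Set Implicit Arguments. Unset Strict Implicit. Unset Printing Implicit Defensive.
Import Order.TTheory GRing.Theory Num.Theory.
Local Open Scope ring_scope.

(* Take weights [ws] consistent with Q' and reset [ws e'] to its true value
   [w e']. The result is consistent with Q, so B is a minimum basis for it;
   as both e and e' then weigh [w e = w e'], exchanging them along the
   fundamental circuit yields the minimum basis B'. Going back to [ws] only
   lowers the weight of e', since [w e' = U_e'] bounds [ws e'], and lowering
   weights of elements of a minimum basis keeps it minimum. *)

Section MatroidExchange.

Variables (E : finType) (M : matroid E).

Lemma indep_augment (I J : {set E}) : indep M I -> indep M J ->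
  exists I', [/\ indep M I', I \subset I', I' \subset I :|: J & (#|J| <= #|I'|)%N].
Proof.
have [n] := ubnP (#|J| - #|I|)%N; elim: n I => [//|n IH] I hn indI indJ.
have [leJI | ltIJ] := leqP #|J| #|I|; first by exists I; rewrite subsetUl.
have [x /setDP [xJ xI] indxI] := indep_exchange indI indJ ltIJ.
have hn' : (#|J| - #|x |: I| < n)%N by rewrite cardsU1 xI; lia.
have [I' [indI' xII' I'sub leJI']] := IH _ hn' indxI indJ.
exists I'; split => //; first exact: subset_trans (subsetUr _ _) xII'.
apply: (subset_trans I'sub).
by rewrite -setUA subUset subxx andbT sub1set in_setU xJ orbT.
Qed.

Lemma basis_indep_card (B J : {set E}) :
  is_basis M B -> indep M J -> #|J| = #|B| -> is_basis M J.
Proof.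
move=> [indB maxB] indJ cardJ; split=> // K JK; apply/negP => indK.
have ltBK : (#|B| < #|K|)%N by rewrite -cardJ proper_card.
have [x /setDP [_ xB] indxB] := indep_exchange indB indK ltBK.
have BxB : B \proper x |: B by rewrite setUC properUl // sub1set.
by move: (maxB _ BxB); rewrite indxB.
Qed.

Lemma cards_swap (B : {set E}) (e f : E) : e \in B -> f \notin B ->
  #|(B :\ e) :|: [set f]| = #|B|.
Proof.
move=> eB fB; rewrite setUC cardsU1 in_setD1 (negPf fB) andbF.
by rewrite (cardsD1 e B) eB.
Qed.

Lemma indep_circuit_swap (B C : {set E}) (e f : E) :
  indep M B -> is_circuit M C -> C \subset f |: B -> f \notin B ->
  e \in B -> e \in C -> indep M ((B :\ e) :|: [set f]).
Proof.
move=> indB [depC minC] CfB fB eB eC.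
have [I' [indI' CeI' I'sub leBI']] := indep_augment (minC _ (properD1 eC)) indB.
suff -> : (B :\ e) :|: [set f] = I' by [].
have eI' : e \notin I'.
  apply: contra depC => eI'; apply: indep_sub indI'.
  by rewrite -(setD1K eC) subUset sub1set eI'.
apply/esym/eqP; rewrite eqEcard cards_swap // leBI' andbT.
apply/subsetP => x xI'; have xe : x != e by apply: contraNneq eI' => <-.
rewrite setUC in_setU1 in_setD1 xe /=.
move/subsetP: I'sub => /(_ x xI'); rewrite in_setU in_setD1 xe /=.
by case/orP => [/(subsetP CfB) | ->]; rewrite ?in_setU1 ?orbT.
Qed.

End MatroidExchange.

Section MinimumBasis.

Variables (R : realType) (E : finType) (M : matroid E).

Lemma min_basis_swap (w : E -> R) (B : {set E}) (e f : E) :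
  is_min_basis M w B -> e \in B -> f \notin B -> w e = w f ->
  is_basis M ((B :\ e) :|: [set f]) -> is_min_basis M w ((B :\ e) :|: [set f]).
Proof.
move=> [_ minB] eB fB wef basB'; split=> // B'' /minB.
suff -> : weight w ((B :\ e) :|: [set f]) = weight w B by [].
rewrite /weight setUC big_setU1 ?in_setD1 ?(negPf fB) ?andbF //=.
by rewrite [RHS](big_setD1 e eB) wef.
Qed.

Lemma min_basis_lower (w w2 : E -> R) (B : {set E}) :
  is_min_basis M w2 B -> (forall x, w x <= w2 x) ->
  (forall x, x \notin B -> w x = w2 x) -> is_min_basis M w B.
Proof.
move=> [basB minB] lew eqw; split=> // B' /minB.
pose d x := w2 x - w x.
have weightE X : weight w X = weight w2 X - \sum_(x in X) d x.
  by rewrite /weight -sumrB; apply: eq_bigr => x _; rewrite /d opprB addrC subrK.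
have d_le (S : {set E}) : \sum_(x in S) d x <= \sum_(x in B) d x.
  rewrite (big_setID B) [X in _ <= X](big_setID S) setIC /=.
  rewrite [X in _ + X]big1 ?addr0 => [|x /setDP [_ xB]]; last first.
    by rewrite /d eqw // subrr.
  by rewrite lerDl sumr_ge0 // => x _; rewrite subr_ge0 lew.
by rewrite !weightE; have := d_le B'; lra.
Qed.

End MinimumBasis.

Section Consistency.

Variables (R : realType) (E : finType) (W : wumatroid R E).

Lemma in_uarea_le_Ubound (A : uarea R) (x : R) : in_uarea A x -> x <= Ubound A.
Proof.
move=> Ax; apply: (ub_le_sup _ Ax).
exists (\sum_(I <- A) `|I.1.2|) => y [[[a b] c] IA /= Iy].
have le_yb : y <= b by move: Iy; case: ifP => _ /andP [_] // /ltW.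
apply: (le_trans le_yb); apply: (le_trans (ler_norm b)).
by rewrite (big_rem _ IA) /= lerDl sumr_ge0.
Qed.

Lemma consistent_subset (Q1 Q2 : {set E}) (ws : E -> R) :
  Q1 \subset Q2 -> consistent W Q2 ws -> consistent W Q1 ws.
Proof. by move=> /subsetP Q12 [wsA wsQ]; split=> // x /Q12 /wsQ. Qed.

Lemma consistent_reset (Q : {set E}) (ws : E -> R) (a : E) :
  consistent W (Q :\ a) ws -> consistent W Q [eta ws with a |-> wum_w W a].
Proof.
move=> [wsA wsQ]; split=> [x | x xQ] /=; case: eqP => [-> | /eqP xa] //.
- exact: wum_wA.
- by apply: wsQ; rewrite in_setD1 xa.
Qed.

End Consistency.

Theorem lemma10 (R : realType) (E : finType) (W : wumatroid R E)
    (B Q : {set E}) (e e' : E) (C : {set E}) :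
  is_min_basis (wum_M W) (wum_w W) B ->
  verifies W Q B ->
  e \in B -> e' \notin B ->
  Ubound (wum_A W e) = Ubound (wum_A W e') ->
  Ubound (wum_A W e') = wum_w W e ->
  wum_w W e = wum_w W e' ->
  fundamental_circuit (wum_M W) B e' C ->
  e \in C ->
  verifies W ((Q :\ e') :|: [set e]) ((B :\ e) :|: [set e']).
Proof.
move=> [basB _] verQ eB e'B _ hU hw [circC CB] eC ws consQ'.
have basB' : is_basis (wum_M W) ((B :\ e) :|: [set e']).
  apply: (basis_indep_card basB); last exact: cards_swap.
  exact: (indep_circuit_swap basB.1 circC).
pose ws2 := [eta ws with e' |-> wum_w W e'].
have consQ : consistent W Q ws2.
  by apply/consistent_reset/(consistent_subset _ consQ')/subsetUl.
have ws2_ee' : ws2 e = ws2 e'.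
  have nee' : e != e' by apply: contraNneq e'B => <-.
  rewrite /= eqxx (negPf nee') -hw; apply: consQ'.2.
  by rewrite in_setU set11 orbT.
apply: (min_basis_lower (min_basis_swap (verQ _ consQ) eB e'B ws2_ee' basB')).
  move=> x /=; case: eqP => [-> | _] //.
  by rewrite -hw -hU; apply: in_uarea_le_Ubound; exact: consQ'.1.
by move=> x /=; case: eqP => [-> | //]; rewrite in_setU set11 orbT.
Qed.
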